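(* Let $R$ be a t-unital ring. Then the functor $\mathrm{Hom}_R(R,{-})$, from the category of all (nonunital) left $R$-modules to the full subcategory of c-unital left $R$-modules, is left adjoint to the fully faithful inclusion of c-unital left $R$-modules into all left $R$-modules. For any left $R$-module $P$, the natural map $P\to\mathrm{Hom}_R(R,P)$, $p\mapsto(r\mapsto rp)$, is the adjunction unit.
   Context: Rings are associative, not necessarily unital; modules are not assumed unital. $R$ is t-unital if $R\otimes_R R\to R$ is an isomorphism. $\mathrm{Hom}_R$ denotes left $R$-module homomorphisms, and $\mathrm{Hom}_R(R,P)$ is a left $R$-module via the right action of $R$ on itself. A left $R$-module $P$ is c-unital if the natural map $P\to\mathrm{Hom}_R(R,P)$ is an isomorphism. *)

From Stdlib Require Import FunctionalExtensionality ProofIrrelevance.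
Set Implicit Arguments. Unset Strict Implicit.

Record AbGroup := {
  ag_car :> Type;
  ag_add : ag_car -> ag_car -> ag_car;
  ag_zero : ag_car;
  ag_opp : ag_car -> ag_car;
  ag_addA : forall x y z, ag_add x (ag_add y z) = ag_add (ag_add x y) z;
  ag_addC : forall x y, ag_add x y = ag_add y x;
  ag_add0 : forall x, ag_add ag_zero x = x;
  ag_addN : forall x, ag_add (ag_opp x) x = ag_zero }.
Arguments ag_add {a}. Arguments ag_zero {a}. Arguments ag_opp {a}.

Definition additive (A B : AbGroup) (f : A -> B) : Prop :=
  forall x y, f (ag_add x y) = ag_add (f x) (f y).

Section AbGroupFacts.
Variable A : AbGroup.
Implicit Types x y z : A.
Lemma ag_addr0 x : ag_add x ag_zero = x.
Proof. rewrite ag_addC; apply ag_add0. Qed.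
Lemma ag_addNr x : ag_add x (ag_opp x) = ag_zero.
Proof. rewrite ag_addC; apply ag_addN. Qed.
Lemma ag_opp_unique x y : ag_add x y = ag_zero -> ag_opp x = y.
Proof.
  intro H. rewrite <- (ag_addr0 (ag_opp x)), <- H, ag_addA, ag_addN, ag_add0.
  reflexivity.
Qed.
Lemma ag_cancel x y z : ag_add x y = ag_add x z -> y = z.
Proof.
  intro H. rewrite <- (ag_add0 y), <- (ag_add0 z), <- (ag_addN x),
    <- !ag_addA, H. reflexivity.
Qed.
Lemma ag_addACA x y z (w : A) :
  ag_add (ag_add x y) (ag_add z w) = ag_add (ag_add x z) (ag_add y w).
Proof.
  rewrite <- !ag_addA. f_equal. rewrite !ag_addA. f_equal. apply ag_addC.
Qed.
Lemma ag_oppD x y : ag_opp (ag_add x y) = ag_add (ag_opp x) (ag_opp y).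
Proof.
  apply ag_opp_unique. rewrite ag_addACA, !ag_addNr. apply ag_add0.
Qed.
End AbGroupFacts.

Lemma additive0 (A B : AbGroup) (f : A -> B) : additive f -> f ag_zero = ag_zero.
Proof.
  intro Hf. apply (@ag_cancel B (f ag_zero)).
  rewrite <- Hf, ag_add0, ag_addr0. reflexivity.
Qed.
Lemma additiveN (A B : AbGroup) (f : A -> B) x :
  additive f -> f (ag_opp x) = ag_opp (f x).
Proof.
  intro Hf. symmetry. apply ag_opp_unique.
  rewrite <- Hf, ag_addNr. apply additive0; exact Hf.
Qed.

Record NURing := {
  nr_grp :> AbGroup;
  nr_mul : nr_grp -> nr_grp -> nr_grp;
  nr_mulA : forall a b c, nr_mul (nr_mul a b) c = nr_mul a (nr_mul b c);
  nr_mulDl : forall a b c, nr_mul (ag_add a b) c = ag_add (nr_mul a c) (nr_mul b c);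
  nr_mulDr : forall a b c, nr_mul a (ag_add b c) = ag_add (nr_mul a b) (nr_mul a c) }.
Arguments nr_mul {n}.

Record LMod (R : NURing) := {
  lm_grp :> AbGroup;
  lm_act : R -> lm_grp -> lm_grp;
  lm_actA : forall r s m, lm_act (nr_mul r s) m = lm_act r (lm_act s m);
  lm_actDl : forall r s m, lm_act (ag_add r s) m = ag_add (lm_act r m) (lm_act s m);
  lm_actDr : forall r m n, lm_act r (ag_add m n) = ag_add (lm_act r m) (lm_act r n) }.
Arguments lm_act {R l}.

Definition is_hom (R : NURing) (M N : LMod R) (f : M -> N) : Prop :=
  additive f /\ forall r m, f (lm_act r m) = lm_act r (f m).

(** t-unitality: R (x)_R R -> R, a (x) b |-> ab, is an isomorphism, i.e.
    multiplication R x R -> R is a universal R-balanced biadditive map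
    (the defining universal property of the tensor product R (x)_R R). *)
Definition biadditive (R : NURing) (A : AbGroup) (b : R -> R -> A) : Prop :=
  (forall x y z, b (ag_add x y) z = ag_add (b x z) (b y z)) /\
  (forall x y z, b x (ag_add y z) = ag_add (b x y) (b x z)).
Definition balanced (R : NURing) (A : AbGroup) (b : R -> R -> A) : Prop :=
  forall x r y, b (nr_mul x r) y = b x (nr_mul r y).
Definition t_unital (R : NURing) : Prop :=
  forall (A : AbGroup) (b : R -> R -> A), biadditive b -> balanced b ->
  exists phi : R -> A, additive phi /\ (forall x y, b x y = phi (nr_mul x y)) /\
    forall psi : R -> A, additive psi -> (forall x y, b x y = psi (nr_mul x y)) ->
      forall z, psi z = phi z.

Definition regular (R : NURing) : LMod R :=
  {| lm_grp := R; lm_act := @nr_mul R; lm_actA := @nr_mulA R;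
     lm_actDl := @nr_mulDl R; lm_actDr := @nr_mulDr R |}.

Section Act.
Variables (R : NURing) (M : LMod R).
Lemma lm_act0 (r : R) : lm_act r (@ag_zero M) = ag_zero.
Proof. apply additive0. intros x y; apply lm_actDr. Qed.
Lemma lm_actN (r : R) (m : M) : lm_act r (ag_opp m) = ag_opp (lm_act r m).
Proof. apply additiveN. intros x y; apply lm_actDr. Qed.
End Act.

Section HomMod.
Variables (R : NURing) (P : LMod R).

Definition HomC := { f : regular R -> P | is_hom f }.
Definition hfun (f : HomC) : R -> P := proj1_sig f.

Lemma hom_eq (f g : HomC) : (forall x, hfun f x = hfun g x) -> f = g.
Proof.
  destruct f as [f Hf], g as [g Hg]; simpl; intro E.
  assert (f = g) by (apply functional_extensionality; exact E). subst g.
  f_equal. apply proof_irrelevance.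
Qed.

Lemma hzero_hom : is_hom (M := regular R) (N := P) (fun _ => ag_zero).
Proof.
  split. intros x y; simpl; symmetry; apply ag_add0.
  intros r m; symmetry; apply lm_act0.
Qed.
Definition hzero : HomC := exist _ _ hzero_hom.

Lemma hadd_hom (f g : HomC) :
  is_hom (M := regular R) (N := P) (fun x => ag_add (hfun f x) (hfun g x)).
Proof.
  destruct f as [f [Af Hf]], g as [g [Ag Hg]]; simpl. split.
  - intros x y. rewrite Af, Ag. apply ag_addACA.
  - intros r m. rewrite Hf, Hg, lm_actDr. reflexivity.
Qed.
Definition hadd (f g : HomC) : HomC := exist _ _ (hadd_hom f g).

Lemma hopp_hom (f : HomC) :
  is_hom (M := regular R) (N := P) (fun x => ag_opp (hfun f x)).
Proof.
  destruct f as [f [Af Hf]]; simpl. split.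
  - intros x y. rewrite Af. apply ag_oppD.
  - intros r m. rewrite Hf, lm_actN. reflexivity.
Qed.
Definition hopp (f : HomC) : HomC := exist _ _ (hopp_hom f).

Definition HomGrp : AbGroup.
Proof.
  refine {| ag_car := HomC; ag_add := hadd; ag_zero := hzero; ag_opp := hopp |}.
  - intros x y z; apply hom_eq; intro t; simpl; apply ag_addA.
  - intros x y; apply hom_eq; intro t; simpl; apply ag_addC.
  - intros x; apply hom_eq; intro t; simpl; apply ag_add0.
  - intros x; apply hom_eq; intro t; simpl; apply ag_addN.
Defined.

Lemma hact_hom (r : R) (f : HomC) :
  is_hom (M := regular R) (N := P) (fun x => hfun f (nr_mul x r)).
Proof.
  destruct f as [f [Af Hf]]; simpl. split.
  - intros x y. rewrite nr_mulDl. apply Af.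
  - intros t m. simpl. rewrite nr_mulA. apply Hf.
Qed.
Definition hact (r : R) (f : HomGrp) : HomGrp := exist _ _ (hact_hom r f).

Definition HomMod : LMod R.
Proof.
  refine {| lm_grp := HomGrp; lm_act := hact |}.
  - intros r s f; apply hom_eq; intro t; simpl. rewrite nr_mulA. reflexivity.
  - intros r s f; apply hom_eq; intro t; simpl.
    rewrite nr_mulDr. destruct f as [f [Af Hf]]; simpl. apply Af.
  - intros r f g; apply hom_eq; intro t; reflexivity.
Defined.

Lemma eta_hom (p : P) :
  is_hom (M := regular R) (N := P) (fun s => lm_act s p).
Proof.
  split.
  - intros x y; apply lm_actDl.
  - intros t s; apply lm_actA.
Qed.
Definition eta (p : P) : HomMod := exist _ _ (eta_hom p).

End HomMod.
Arguments eta {R} P p.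
Arguments HomMod {R} P.

Definition c_unital (R : NURing) (P : LMod R) : Prop :=
  (forall p q : P, eta P p = eta P q -> p = q) /\
  (forall h : HomMod P, exists p : P, eta P p = h).

Section HomMap.
Variables (R : NURing) (P P' : LMod R) (f : P -> P') (Hf : is_hom f).
Lemma homMap_hom (h : HomMod P) :
  is_hom (M := regular R) (N := P') (fun x => f (hfun h x)).
Proof.
  destruct Hf as [Af Hf']. destruct h as [h [Ah Hh]]; simpl. split.
  - intros x y. rewrite Ah. apply Af.
  - intros r m. rewrite Hh. apply Hf'.
Qed.
Definition homMap (h : HomMod P) : HomMod P' := exist _ _ (homMap_hom h).
End HomMap.

From Stdlib Require Import ClassicalEpsilon.

(* t-unitality says two things about R: an additive map out of R is determined
   by its values on products, and every balanced biadditive map on R x R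
   factors through multiplication.  The first makes eta injective on
   Hom_R(R,P); the second makes it surjective, since an element F of
   Hom_R(R, Hom_R(R,P)) gives the balanced map (x, y) |-> F(y)(x).
   For the adjunction, any module map g : Hom_R(R,P) -> Q extending f along
   eta satisfies s g(h) = g(s h) = g(eta(h s)) = f(h s), i.e.
   eta_Q o g = Hom_R(R,f); when eta_Q is bijective this forces
   g = eta_Q^-1 o Hom_R(R,f), and that map does extend f. *)

Section TUnital.
Context {R : NURing} (HR : t_unital R).

Lemma t_unital_additive_eq {A : AbGroup} {psi1 psi2 : R -> A} :
  additive psi1 -> additive psi2 ->
  (forall x y, psi1 (nr_mul x y) = psi2 (nr_mul x y)) ->
  forall z, psi1 z = psi2 z.
Proof.
  intros H1 H2 E z.
  destruct (HR A (fun x y => psi1 (nr_mul x y))) as [phi [_ [_ Uphi]]].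
  - split; intros x y w.
    + rewrite nr_mulDl; apply H1.
    + rewrite nr_mulDr; apply H1.
  - intros x r y. rewrite nr_mulA. reflexivity.
  - rewrite (Uphi psi1 H1 (fun x y => eq_refl)), (Uphi psi2 H2 E). reflexivity.
Qed.

Lemma t_unital_factor_hom {P : LMod R} {b : R -> R -> P} :
  biadditive b -> balanced b ->
  (forall r x y, b (nr_mul r x) y = lm_act r (b x y)) ->
  exists phi : regular R -> P,
    is_hom phi /\ forall x y, b x y = phi (nr_mul x y).
Proof.
  intros Hadd Hbal Hlin.
  destruct (HR _ _ Hadd Hbal) as [phi [Aphi [Ephi _]]].
  exists phi. split; [split|exact Ephi].
  - exact Aphi.
  - intros r z. simpl.
    apply (t_unital_additive_eq (psi1 := fun z => phi (nr_mul r z))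
                                (psi2 := fun z => lm_act r (phi z))).
    + intros x y. rewrite nr_mulDr. apply Aphi.
    + intros x y. rewrite Aphi. apply lm_actDr.
    + intros x y. rewrite <- nr_mulA, <- !Ephi. apply Hlin.
Qed.

End TUnital.

Section HomModBasics.
Context {R : NURing} {P : LMod R}.

Lemma hfun_act (r : R) (h : HomMod P) x : hfun (lm_act r h) x = hfun h (nr_mul x r).
Proof. reflexivity. Qed.

Lemma hfun_eta (p : P) s : hfun (eta P p) s = lm_act s p.
Proof. reflexivity. Qed.

Lemma hfun_is_hom (h : HomMod P) : is_hom (M := regular R) (N := P) (hfun h).
Proof. exact (proj2_sig h). Qed.

Lemma eta_is_hom : is_hom (eta P).
Proof.
  split.
  - intros p q. apply hom_eq; intro s. apply lm_actDr.
  - intros r p. apply hom_eq; intro s.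
    rewrite hfun_act, !hfun_eta. symmetry; apply lm_actA.
Qed.

Lemma act_eq_eta_hfun (s : R) (h : HomMod P) : lm_act s h = eta P (hfun h s).
Proof.
  apply hom_eq; intro x. rewrite hfun_act, hfun_eta.
  apply (proj2 (hfun_is_hom h)).
Qed.

End HomModBasics.

Section HomModCUnital.
Context {R : NURing} (HR : t_unital R) (P : LMod R).

Lemma HomMod_eta_inj (h h' : HomMod P) : eta (HomMod P) h = eta (HomMod P) h' -> h = h'.
Proof.
  intros E. apply hom_eq.
  apply (t_unital_additive_eq HR (proj1 (hfun_is_hom h)) (proj1 (hfun_is_hom h'))).
  intros x y.
  exact (f_equal (fun F : HomMod (HomMod P) => hfun (hfun F y) x) E).
Qed.

Lemma HomMod_eta_surj (F : HomMod (HomMod P)) : exists h, eta (HomMod P) h = F.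
Proof.
  destruct (hfun_is_hom F) as [AF HF].
  destruct (t_unital_factor_hom HR (b := fun x s => hfun (hfun F s) x))
    as [phi [Hphi Ephi]].
  - split; intros x y z.
    + apply (proj1 (hfun_is_hom (hfun F z))).
    + rewrite AF. reflexivity.
  - intros x r y. symmetry. exact (f_equal (fun h : HomMod P => hfun h x) (HF r y)).
  - intros r x y. apply (proj2 (hfun_is_hom (hfun F y))).
  - exists (exist _ phi Hphi).
    apply hom_eq; intro s. apply hom_eq; intro x. symmetry. apply Ephi.
Qed.

Lemma HomMod_c_unital : c_unital (HomMod P).
Proof. split; [exact HomMod_eta_inj | exact HomMod_eta_surj]. Qed.

End HomModCUnital.

Section HomMapFacts.
Context {R : NURing} {P Q : LMod R} {f : P -> Q} (Hf : is_hom f).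

Lemma homMap_is_hom : is_hom (homMap Hf).
Proof.
  split.
  - intros h h'. apply hom_eq; intro x. apply (proj1 Hf).
  - intros r h. apply hom_eq; intro x. reflexivity.
Qed.

Lemma homMap_eta (p : P) : homMap Hf (eta P p) = eta Q (f p).
Proof. apply hom_eq; intro s. apply (proj2 Hf). Qed.

Lemma eta_comp_extension {g : HomMod P -> Q} :
  is_hom g -> (forall p, g (eta P p) = f p) ->
  forall h, eta Q (g h) = homMap Hf h.
Proof.
  intros [_ Hg] Eg h. apply hom_eq; intro s.
  rewrite hfun_eta, <- Hg, act_eq_eta_hfun, Eg. reflexivity.
Qed.

End HomMapFacts.

Section CUnitalInverse.
Context {R : NURing} {Q : LMod R} (HQ : c_unital Q).

Definition eta_inv (h : HomMod Q) : Q :=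
  proj1_sig (constructive_indefinite_description _ (proj2 HQ h)).

Lemma eta_invK (h : HomMod Q) : eta Q (eta_inv h) = h.
Proof. exact (proj2_sig (constructive_indefinite_description _ (proj2 HQ h))). Qed.

Lemma eta_inv_is_hom : is_hom eta_inv.
Proof.
  destruct (eta_is_hom (P := Q)) as [Aeta Heta].
  split.
  - intros h h'. apply (proj1 HQ). rewrite Aeta, !eta_invK. reflexivity.
  - intros r h. apply (proj1 HQ). rewrite Heta, !eta_invK. reflexivity.
Qed.

End CUnitalInverse.

Lemma is_hom_comp {R : NURing} {M N K : LMod R} {f : M -> N} {g : N -> K} :
  is_hom f -> is_hom g -> is_hom (fun m => g (f m)).
Proof.
  intros [Af Hf] [Ag Hg]. split.
  - intros x y. rewrite Af. apply Ag.
  - intros r m. rewrite Hf. apply Hg.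
Qed.

Theorem lemma5p3 (R : NURing) (HR : t_unital R) :
  (* Hom_R(R,P) is c-unital, so Hom_R(R,-) lands in c-unital modules *)
  (forall P : LMod R, c_unital (HomMod P)) /\
  (* the natural map eta_P : P -> Hom_R(R,P) is a module map, natural in P *)
  (forall P : LMod R, is_hom (eta P)) /\
  (forall (P P' : LMod R) (f : P -> P') (Hf : is_hom f),
      is_hom (homMap Hf) /\ (forall p : P, homMap Hf (eta P p) = eta P' (f p))) /\
  (* universal property of eta_P w.r.t. c-unital modules: adjunction with unit eta *)
  (forall (P Q : LMod R), c_unital Q -> forall f : P -> Q, is_hom f ->
     exists g : HomMod P -> Q,
       is_hom g /\ (forall p : P, g (eta P p) = f p) /\
       forall g' : HomMod P -> Q, is_hom g' -> (forall p : P, g' (eta P p) = f p) ->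
         forall x, g' x = g x).
Proof.
  split; [intro P; exact (HomMod_c_unital HR P)|].
  split; [exact (@eta_is_hom R)|].
  split; [intros P P' f Hf; exact (conj (homMap_is_hom Hf) (homMap_eta Hf))|].
  intros P Q HQ f Hf.
  exists (fun h => eta_inv HQ (homMap Hf h)). split; [|split].
  - exact (is_hom_comp (homMap_is_hom Hf) (eta_inv_is_hom HQ)).
  - intro p. apply (proj1 HQ). rewrite eta_invK. apply homMap_eta.
  - intros g' Hg' Eg' h. apply (proj1 HQ).
    rewrite eta_invK. exact (eta_comp_extension Hf Hg' Eg' h).
Qed.
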